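(* Let $\lambda>1$ and suppose $(P_\lambda)$ is feasible. Let $x^*$ be an optimal solution to $(P_\lambda)$ and $\mathcal{L}$ a laminar decomposition of $x^*$; let $x'$ and $\mathcal{L}'$ be such that $(x',\mathcal{L}')$ is a rainbow-free decomposition with $\mathrm{supp}(x')\subseteq\mathrm{supp}(x^* )$, $\mathcal{L}\subseteq\mathcal{L}'$ and $x'(\delta(S))\le x^*(\delta(S))$ for all $S\in\mathcal{S}$; and let $T$ be a spanning tree of $G$ obtained as the concatenation of spanning trees $T_L\subseteq\mathrm{supp}(x')$ of $G^{\mathcal{L}'}_L$, one for each $L\in\mathcal{L}'$. Let $y^*$ be an optimal solution to $\max_{y\in\mathbb{R}^{\mathcal{S}}_{\ge0}}g_\lambda(y)$. Then $c(T)\le\sum_ec^{y^*}_ex^*_e=\sum_ec_ex^*_e+\lambda\sum_{S\in\mathcal{S}}b_Sy^*_S$.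
   Context: Setting: $G=(V,E)$ undirected connected graph, costs $c_e\ge0$, a chain $\mathcal{S}$ of node sets $S_1\subsetneq\dots\subsetneq S_\ell\subsetneq V$, integers $b_S$. $E(S)$ = edges with both ends in $S$, $\delta(S)$ = edges with exactly one end in $S$, $z(F)=\sum_{e\in F}z_e$, $\mathrm{supp}(z)=\{e:z_e>0\}$, $c(T)=\sum_{e\in T}c_e$. $P_{ST}(G)=\{x\in\mathbb{R}^E_{\ge0}: x(E(S))\le|S|-1\ \forall\emptyset\ne S\subsetneq V,\ x(E)=|V|-1\}$. $(P_\lambda)$: minimize $\sum_ec_ex_e$ over $x\in P_{ST}(G)$ with $x(\delta(S))\le\lambda b_S$ for all $S\in\mathcal{S}$. For $y\in\mathbb{R}^{\mathcal{S}}$, $c^y_e=c_e+\sum_{S\in\mathcal{S}:e\in\delta(S)}y_S$ and $g_\lambda(y)=\min_{x\in P_{ST}(G)}\big(\sum_ec^y_ex_e-\lambda\sum_Sb_Sy_S\big)$. A laminar decomposition of $x\in P_{ST}(G)$ is an inclusion-wise maximal laminar family of nonempty sets $A\subseteq V$ with $x(E(A))=|A|-1$. For a laminar family $\mathcal{L}$ and $L\in\mathcal{L}$, $G^{\mathcal{L}}_L$ is obtained from $(L,E(L))$ by contracting the maximal members of $\mathcal{L}$ strictly contained in $L$. With $\mathcal{S}_e=\{S\in\mathcal{S}:e\in\delta(S)\}$, edges $e,f$ form a rainbow if $\mathcal{S}_e\subseteq\mathcal{S}_f$ or $\mathcal{S}_f\subseteq\mathcal{S}_e$; $(x,\mathcal{L})$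 is a rainbow-free decomposition if $\mathcal{L}$ is a laminar decomposition of $x$ and for every $L\in\mathcal{L}$ no two edges of $\mathrm{supp}(x)\cap E(G^{\mathcal{L}}_L)$ form a rainbow. *)

(* Vectors in R^E / R^S are functions
   {set V} -> R whose values outside E / the chain are irrelevant. *)
From HB Require Import structures.
From mathcomp Require Import all_boot all_order all_algebra.
From mathcomp Require Import reals.
Set Implicit Arguments. Unset Strict Implicit. Unset Printing Implicit Defensive.
Import Order.TTheory GRing.Theory Num.Theory.
Local Open Scope ring_scope.

Section Defs.
Variables (R : realType) (V : finType).
Implicit Types (E F Sc T : {set {set V}}) (S A B C L : {set V})
  (x y c : {set V} -> R) (bS : {set V} -> int).

Definition simple_graph E := forall e, e \in E -> #|e| = 2%N.
Definition graph_connected E :=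
  forall a0 b0 : V, connect [rel p q | [set p; q] \in E] a0 b0.

Definition is_chain Sc :=
  (forall A B, A \in Sc -> B \in Sc -> (A \subset B) || (B \subset A)) /\
  (forall A, A \in Sc -> A \proper [set: V]).

Definition Eset E S := [set e in E | e \subset S].
Definition dset E S := [set e in E | #|e :&: S| == 1%N].
Definition xsum x F := \sum_(e in F) x e.
Definition supp E x := [set e in E | 0 < x e].

Definition in_PST E x :=
  (forall e, e \in E -> 0 <= x e) /\
  (forall S, S != set0 -> S \proper [set: V] -> xsum x (Eset E S) <= #|S|%:R - 1) /\
  xsum x E = #|V|%:R - 1.

Definition feasible E Sc bS (lam : R) x :=
  in_PST E x /\ forall S, S \in Sc -> xsum x (dset E S) <= lam * (bS S)%:~R.

Definition lin_cost E c x := \sum_(e in E) c e * x e.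

Definition opt_primal E Sc bS lam c x :=
  feasible E Sc bS lam x /\
  forall x', feasible E Sc bS lam x' -> lin_cost E c x <= lin_cost E c x'.

Definition cy E Sc c y (e : {set V}) := c e + \sum_(S in Sc | e \in dset E S) y S.

Definition gobj E Sc bS (lam : R) c y x :=
  \sum_(e in E) cy E Sc c y e * x e - lam * \sum_(S in Sc) (bS S)%:~R * y S.

Definition is_g_value E Sc bS lam c y (v : R) :=
  (exists x, in_PST E x /\ gobj E Sc bS lam c y x = v) /\
  (forall x, in_PST E x -> v <= gobj E Sc bS lam c y x).

Definition nonneg_on Sc y := forall S, S \in Sc -> 0 <= y S.

Definition opt_dual E Sc bS lam c y :=
  nonneg_on Sc y /\
  exists v, is_g_value E Sc bS lam c y v /\
    forall y' v', nonneg_on Sc y' -> is_g_value E Sc bS lam c y' v' -> v' <= v.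

Definition tight E x A := (A != set0) && (xsum x (Eset E A) == #|A|%:R - 1).

Definition laminar F :=
  forall A B, A \in F -> B \in F ->
    [|| A \subset B, B \subset A | [disjoint A & B]].

Definition laminar_decomp E x F :=
  laminar F /\ (forall A, A \in F -> tight E x A) /\
  forall F', laminar F' -> (forall A, A \in F' -> tight E x A) ->
    F \subset F' -> F' = F.

Definition children F L :=
  [set C in F | (C \proper L) && ~~ [exists D in F, (C \proper D) && (D \proper L)]].

(* edges of G^F_L (loops created by contraction removed) *)
Definition Eg E F L :=
  [set e in Eset E L | [forall C in children F L, ~~ (e \subset C)]].

(* two vertices of L represent the same vertex of G^F_L *)
Definition sameclass F L (a0 b0 : V) :=
  (a0 == b0) || [exists C in children F L, (a0 \in C) && (b0 \in C)].

Definition connects F L T :=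
  forall a0 b0, a0 \in L -> b0 \in L ->
    connect [rel p q | [&& p \in L, q \in L & sameclass F L p q || ([set p; q] \in T)]] a0 b0.

Definition spanning_tree_contr E F L T :=
  T \subset Eg E F L /\ connects F L T /\ forall e, e \in T -> ~ connects F L (T :\ e).

Definition Sfam E Sc (e : {set V}) := [set S in Sc | e \in dset E S].

Definition rainbow E Sc e f :=
  (Sfam E Sc e \subset Sfam E Sc f) || (Sfam E Sc f \subset Sfam E Sc e).

Definition rainbow_free_decomp E Sc x F :=
  in_PST E x /\ laminar_decomp E x F /\
  forall L, L \in F -> forall e f,
    e \in supp E x :&: Eg E F L -> f \in supp E x :&: Eg E F L -> e != f ->
    ~~ rainbow E Sc e f.

End Defs.

From HB Require Import structures.
From mathcomp Require Import all_boot all_order all_algebra.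
From mathcomp Require Import reals boolp.
From mathcomp Require classical_sets.
From mathcomp Require Import ring lra zify.
Set Implicit Arguments. Unset Strict Implicit. Unset Printing Implicit Defensive.
Import Order.TTheory GRing.Theory Num.Theory.

(* Lagrangian duality, proved through Farkas' lemma by Fourier-Motzkin elimination,
   gives complementary slackness: sum_S y*_S x*(delta(S)) = lam sum_S b_S y*_S, and
   x* minimizes c^{y*} over P_ST.  The tree T lies in the smallest face of P_ST
   containing x*: its edges are in the support of x*, it has |V| - 1 edges, and it has
   at least |S| - 1 edges inside every x*-tight set S.  The last fact follows by
   induction, comparing S with the smallest member A of L containing S: uncrossing
   shows that every child of A meets S and that every edge of T joining two
   children of A lies in S, while T induces a spanning tree on every member of L'.
   Hence x* + eps (x* - 1_T) is in P_ST for small eps > 0, so c^{y*}(T) is at most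
   c^{y*} x*, and c(T) <= c^{y*}(T) as y* >= 0. *)

Lemma card_sum_mem (T : finType) (P : {set T}) : #|P| = \sum_(v : T) (v \in P).
Proof. by rewrite -sum1_card big_mkcond; apply: eq_bigr => v _; case: (v \in P). Qed.

Lemma connect_invariant (T : finType) (e : rel T) (P : T -> Prop) a b :
  P a -> (forall x y, P x -> e x y -> P y) -> connect e a b -> P b.
Proof.
move=> Pa hs /connectP[p hp ->]; elim: p a Pa hp => //= y p IH a Pa /andP[hay hp].
exact: IH (hs _ _ Pa hay) hp.
Qed.

Section Children.
Variables (V : finType) (F : {set {set V}}).
Hypothesis F_laminar : laminar F.
Implicit Types (A B C D X : {set V}).

Lemma mem_children A C : C \in children F A -> C \in F /\ C \proper A.
Proof. by rewrite inE => /andP[-> /andP[-> _]]. Qed.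

Lemma children_disjoint A C D : C \in children F A -> D \in children F A ->
  C != D -> [disjoint C & D].
Proof.
move=> hC hD hCD; have [[hCF hCA] [hDF hDA]] := (mem_children hC, mem_children hD).
case/or3P: (F_laminar hCF hDF) => // hsub.
- move: hC; rewrite inE => /and3P[_ _ /existsP]; case; exists D.
  by rewrite hDF hDA properEneq hCD hsub.
- move: hD; rewrite inE => /and3P[_ _ /existsP]; case; exists C.
  by rewrite hCF hCA properEneq eq_sym hCD hsub.
Qed.

Lemma children_mem_uniq A C D v : C \in children F A -> D \in children F A ->
  v \in C -> v \in D -> C = D.
Proof.
move=> hC hD hvC hvD; apply/eqP; apply: contraT => /(children_disjoint hC hD).
by rewrite disjoint_subset => /subsetP/(_ v hvC); rewrite inE /= hvD.
Qed.

Lemma children_sub_uniq A C D X : C \in children F A -> D \in children F A ->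
  X != set0 -> X \subset C -> X \subset D -> C = D.
Proof.
move=> hC hD /set0Pn[v hv] /subsetP/(_ v hv) hvC /subsetP/(_ v hv) hvD.
exact: children_mem_uniq hC hD hvC hvD.
Qed.

Lemma sub_child A B : B \in F -> B \proper A -> exists2 C, C \in children F A & B \subset C.
Proof.
move=> hBF hBA.
pose P D := [&& D \in F, B \subset D & D \proper A].
have PB : P B by rewrite /P hBF subxx hBA.
case: (arg_maxnP (fun D => #|D|) PB) => C /and3P[hCF hBC hCA] hmax.
exists C => //; rewrite inE hCF hCA /=; apply/existsP => -[D /and3P[hDF hCD hDA]].
have := hmax D; rewrite /P hDF hDA (subset_trans hBC (proper_sub hCD)) /= => /(_ isT).
by rewrite leqNgt proper_card.
Qed.

Lemma children_cover A v : (forall u, [set u] \in F) -> (1 < #|A|)%N -> v \in A ->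
  exists2 C, C \in children F A & v \in C.
Proof.
move=> F_sing hA hv; have hp : [set v] \proper A by rewrite properEcard sub1set hv cards1.
by have [C hC] := sub_child (F_sing v) hp; rewrite sub1set; exists C.
Qed.

Lemma sum_children_subset A X : X != set0 ->
  (\sum_(C in children F A) (X \subset C) = [exists C in children F A, X \subset C])%N.
Proof.
move=> hX; case: existsP => [[C0 /andP[hC0 hXC0]]|hn].
  rewrite (bigD1 C0) //= hXC0 big1 // => C /andP[hC hCC0].
  apply/eqP; rewrite eqb0; apply: contra hCC0 => hXC.
  by rewrite (children_sub_uniq hC hC0 hX hXC hXC0).
rewrite big1 // => C hC; apply/eqP; rewrite eqb0; apply/negP => hXC.
by apply: hn; exists C; rewrite hC.
Qed.

Lemma sum_children_card A X :
  (forall v, v \in A -> exists2 C, C \in children F A & v \in C) -> X \subset A ->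
  (\sum_(C in children F A) #|X :&: C| = #|X|)%N.
Proof.
move=> A_cover hXA; under eq_bigr do rewrite card_sum_mem.
rewrite exchange_big /= card_sum_mem; apply: eq_bigr => v _.
under eq_bigr do rewrite inE.
case hv: (v \in X) => /=; last by rewrite big1.
under eq_bigr do rewrite -sub1set.
rewrite (sum_children_subset A); last by apply/set0Pn; exists v; rewrite inE.
have [C hC hvC] := A_cover v (subsetP hXA v hv).
by apply/eqP; rewrite eqb1; apply/existsP; exists C; rewrite hC sub1set.
Qed.

Lemma laminar_setU1 A :
  (forall B, B \in F -> [|| A \subset B, B \subset A | [disjoint A & B]]) ->
  laminar (A |: F).
Proof.
move=> h X Y; rewrite !inE => /predU1P[->|hX] /predU1P[->|hY].
- by rewrite subxx.
- exact: h.
- by case/or3P: (h X hX) => hAX; rewrite ?hAX ?orbT // disjoint_sym hAX !orbT.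
- exact: F_laminar.
Qed.

End Children.

Section ContractedGraph.
Variables (V : finType) (F : {set {set V}}) (A : {set V}).
Hypothesis F_laminar : laminar F.
Hypothesis children_neq0 : forall C, C \in children F A -> C != set0.
Hypothesis A_cover : forall v, v \in A -> exists2 C, C \in children F A & v \in C.
Implicit Types (Fs : {set {set V}}) (a p q : V).

Definition contr_rel Fs :=
  [rel p q | [&& p \in A, q \in A & sameclass F A p q || ([set p; q] \in Fs)]].

Lemma contr_connect_sym Fs : connect_sym (contr_rel Fs).
Proof.
apply/sym_connect_sym => p q /=; rewrite setUC andbCA; congr [&& _, _ & _ || _].
rewrite /sameclass eq_sym; congr (_ || _).
by apply/existsP/existsP => -[C /and3P[hC h1 h2]]; exists C; rewrite hC h1 h2.
Qed.

Lemma contr_connect_mono Fs1 Fs2 a b : Fs1 \subset Fs2 ->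
  connect (contr_rel Fs1) a b -> connect (contr_rel Fs2) a b.
Proof.
move=> hs; apply: connect_sub => x y /= /and3P[hx hy h]; apply: connect1 => /=.
by rewrite hx hy; case/orP: h => [->//|h]; rewrite (subsetP hs) ?orbT.
Qed.

Definition contr_comp Fs p := [set q | connect (contr_rel Fs) p q].

Definition n_contr_comp Fs := #|[set contr_comp Fs p | p in A]|.

Lemma mem_contr_comp Fs p : p \in contr_comp Fs p.
Proof. by rewrite inE connect0. Qed.

Lemma contr_comp_eq Fs p q : connect (contr_rel Fs) p q -> contr_comp Fs p = contr_comp Fs q.
Proof.
move=> hpq; apply/setP => z; rewrite !inE; apply/idP/idP => h; last exact: connect_trans h.
by apply: connect_trans h; rewrite contr_connect_sym.
Qed.

Lemma n_contr_comp0 : n_contr_comp set0 = #|children F A|.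
Proof.
have comp_child p C : C \in children F A -> p \in C -> contr_comp set0 p = C.
  move=> hC hp; have [_ /proper_sub hCA] := mem_children hC.
  apply/setP => q; rewrite inE; apply/idP/idP => h.
    apply: (connect_invariant (P := fun z => z \in C)) h => // x y hx /= /and3P[_ hy].
    rewrite in_set0 orbF /sameclass => /orP[/eqP <-//|/existsP[D /and3P[hD hxD hyD]]].
    by rewrite -(children_mem_uniq F_laminar hD hC hxD hx).
  apply: connect1 => /=; rewrite !(subsetP hCA) //= /sameclass.
  by apply/orP; left; apply/orP; right; apply/existsP; exists C; rewrite hC hp h.
rewrite /n_contr_comp; suff -> : [set contr_comp set0 p | p in A] = children F A by [].
apply/setP => C; apply/imsetP/idP.
  by case=> p hp ->; have [D hD hpD] := A_cover hp; rewrite (comp_child _ _ hD hpD).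
move=> hC; have [_ hCA] := mem_children hC; have /set0Pn[v hv] := children_neq0 hC.
by exists v; [rewrite (subsetP (proper_sub hCA)) | rewrite (comp_child _ _ hC hv)].
Qed.

Lemma n_contr_comp_connected Fs : A != set0 ->
  (forall a b, a \in A -> b \in A -> connect (contr_rel Fs) a b) -> n_contr_comp Fs = 1%N.
Proof.
move=> /set0Pn[a0 ha0] hc.
have comp_A p : p \in A -> contr_comp Fs p = A.
  move=> hp; apply/setP => q; rewrite inE; apply/idP/idP => h; last exact: hc.
  by apply: (connect_invariant (P := fun z => z \in A)) h => // x y _ /= /and3P[].
rewrite /n_contr_comp (_ : [set contr_comp Fs p | p in A] = [set A]) ?cards1 //.
apply/setP => C; rewrite inE; apply/imsetP/eqP => [[p hp ->]|->]; first exact: comp_A.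
by exists a0; rewrite ?comp_A.
Qed.

Section AddBridge.
Variables (Fs : {set {set V}}) (p0 q0 : V).
Hypotheses (p0A : p0 \in A) (q0A : q0 \in A).
Hypothesis p0q0_disconnected : ~~ connect (contr_rel Fs) p0 q0.

Let Fs' := [set p0; q0] |: Fs.
Let U := contr_comp Fs p0 :|: contr_comp Fs q0.

Lemma mem_bridge_comps a : (a \in U) = connect (contr_rel Fs) p0 a || connect (contr_rel Fs) q0 a.
Proof. by rewrite !inE. Qed.

Lemma contr_rel_add_bridge x y : contr_rel Fs' x y ->
  contr_rel Fs x y \/ [set x; y] = [set p0; q0].
Proof.
move=> /= /and3P[hx hy]; rewrite /Fs' in_setU1 => /orP[h|/orP[/eqP h|h]]; [left|by right|left].
- by rewrite hx hy h.
- by rewrite hx hy h orbT.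
Qed.

Lemma contr_comp_add_bridge_in a : a \in U -> contr_comp Fs' a = U.
Proof.
have bridge : connect (contr_rel Fs') p0 q0.
  by apply: connect1; rewrite /= p0A q0A /Fs' setU11 orbT.
have from_p0 b : b \in U -> connect (contr_rel Fs') p0 b.
  rewrite mem_bridge_comps => /orP[] /(contr_connect_mono (subsetU1 [set p0; q0] Fs)) h //.
  exact: connect_trans bridge h.
move=> ha; apply/setP => z; rewrite [in LHS]inE; apply/idP/idP => h; last first.
  by apply: connect_trans (from_p0 _ h); rewrite contr_connect_sym from_p0.
apply: (connect_invariant (P := fun z => z \in U)) h => // x y.
rewrite !mem_bridge_comps => hx /contr_rel_add_bridge[hxy|hxy].
  case/orP: hx => h; apply/orP; [left|right];
    by apply: connect_trans h (connect1 (e := contr_rel Fs) hxy).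
have : y \in [set p0; q0] by rewrite -hxy !inE eqxx orbT.
by rewrite !inE => /orP[] /eqP->; rewrite connect0 ?orbT.
Qed.

Lemma contr_comp_add_bridge_out a : a \notin U -> contr_comp Fs' a = contr_comp Fs a.
Proof.
rewrite mem_bridge_comps negb_or => /andP[/negP n1 /negP n2].
apply/setP => z; rewrite !inE; apply/idP/idP; last first.
  exact: contr_connect_mono (subsetU1 [set p0; q0] Fs).
apply: (connect_invariant (P := connect (contr_rel Fs) a)) => // x y hx.
case/contr_rel_add_bridge => [hxy|hxy].
  exact: connect_trans hx (connect1 (e := contr_rel Fs) hxy).
have : x \in [set p0; q0] by rewrite -hxy !inE eqxx.
by rewrite !inE => /orP[] /eqP hx0; [case: n1 | case: n2]; rewrite contr_connect_sym -hx0.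
Qed.

Lemma n_contr_comp_add_bridge : n_contr_comp Fs = (n_contr_comp Fs' + 1)%N.
Proof.
set I := [set contr_comp Fs p | p in A].
set Rr := I :\: [set contr_comp Fs p0; contr_comp Fs q0].
have not_in_U p : p \in A -> contr_comp Fs p \in Rr -> p \notin U.
  move=> hp; rewrite mem_bridge_comps !inE => /andP[/norP[n1 n2] _].
  by apply/norP; split; [move: n1|move: n2]; apply: contraNN => /contr_comp_eq ->.
have I' : [set contr_comp Fs' p | p in A] = U |: Rr.
  apply/setP => C; rewrite in_setU1; apply/imsetP/idP => [[p hp ->]|].
    have [pU|pU] := boolP (p \in U); first by rewrite contr_comp_add_bridge_in ?eqxx.
    rewrite contr_comp_add_bridge_out //; apply/orP; right.
    by rewrite !inE imset_f ?andbT //; move: pU; apply: contraNN => /orP[] /eqP h;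
      have := mem_contr_comp Fs p; rewrite h inE mem_bridge_comps => -> //; rewrite orbT.
  case/orP => [/eqP->|].
    by exists p0; rewrite // contr_comp_add_bridge_in // inE mem_contr_comp.
  move=> hC; have := hC; rewrite inE => /andP[_ /imsetP[p hp defC]].
  by exists p; rewrite // contr_comp_add_bridge_out ?defC ?(not_in_U p) // -defC.
have U_notin : U \notin Rr.
  apply/negP => hU; have := hU; rewrite inE => /andP[_ /imsetP[p hp defU]].
  by have := not_in_U p hp; rewrite -defU hU defU mem_contr_comp => /(_ isT).
have two_comps : #|[set contr_comp Fs p0; contr_comp Fs q0]| = 2%N.
  rewrite cards2; case: eqP => // h; move: p0q0_disconnected.
  by have := mem_contr_comp Fs q0; rewrite -h inE => ->.
have sub_I : [set contr_comp Fs p0; contr_comp Fs q0] \subset I.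
  by apply/subsetP => C; rewrite !inE => /orP[] /eqP->; apply: imset_f.
rewrite /n_contr_comp I' cardsU1 U_notin -/I -(cardsID [set contr_comp Fs p0; contr_comp Fs q0] I).
by rewrite (setIidPr sub_I) two_comps addn1.
Qed.

End AddBridge.

Section SpanningTree.
Variables (E Tf : {set {set V}}).
Hypothesis E_simple : simple_graph E.
Hypothesis Tf_tree : spanning_tree_contr E F A Tf.

Lemma spanning_tree_contr_edge e : e \in Tf ->
  exists p, exists2 q, e = [set p; q] & (p \in A) && (q \in A).
Proof.
have [Tf_sub _] := Tf_tree; move=> /(subsetP Tf_sub); rewrite !inE => /andP[/andP[he heA] _].
have /eqP/cards2P[p [q [_ def_e]]] := E_simple he.
by exists p, q; rewrite // -!sub1set -subUset -def_e.
Qed.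

Lemma spanning_tree_contr_bridge Fs e p q : Fs \subset Tf -> e \in Fs -> e = [set p; q] ->
  ~~ connect (contr_rel (Fs :\ e)) p q.
Proof.
have [_ [Tf_conn Tf_min]] := Tf_tree.
move=> FsTf heF def_e; apply/negP => /(contr_connect_mono (setSD _ FsTf)) pq_conn.
apply: (Tf_min e (subsetP FsTf e heF)) => a b ha hb.
apply: connect_sub (Tf_conn a b ha hb) => x y /= /and3P[hx hy].
case/orP => [hs|hT]; first by apply: connect1; rewrite /= hx hy hs.
have [/eqP exy|nexy] := boolP ([set x; y] == e); last first.
  by apply: connect1; rewrite /= hx hy !inE nexy hT !orbT.
have xy_pq z : z \in [set x; y] -> (z == p) || (z == q) by rewrite exy def_e !inE.
have := xy_pq x; have := xy_pq y; rewrite !inE !eqxx orbT => /(_ isT) hy' /(_ isT) hx'.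
rewrite contr_connect_sym in pq_conn.
by case/orP: hx' hy' => /eqP-> /orP[] /eqP->; rewrite ?connect0 // contr_connect_sym.
Qed.

Lemma spanning_tree_contr_card : A != set0 -> (#|Tf| + 1 = #|children F A|)%N.
Proof.
have [_ [Tf_conn _]] := Tf_tree.
move=> A_neq0; rewrite -(n_contr_comp_connected A_neq0 Tf_conn) addnC.
suff comps_edges n Fs : #|Fs| = n -> Fs \subset Tf ->
    (n_contr_comp Fs + #|Fs| = #|children F A|)%N by exact: comps_edges.
elim: n Fs => [|n IH] Fs hn FsTf.
  by move/eqP: hn; rewrite cards_eq0 => /eqP->; rewrite cards0 addn0 n_contr_comp0.
have /set0Pn[e he] : Fs != set0 by rewrite -card_gt0 hn.
have [p [q def_e /andP[hp hq]]] := spanning_tree_contr_edge (subsetP FsTf e he).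
have := n_contr_comp_add_bridge hp hq (spanning_tree_contr_bridge FsTf he def_e).
rewrite -def_e setD1K // => bridge.
have hcard : #|Fs| = (#|Fs :\ e|).+1 by rewrite (cardsD1 e Fs) he.
rewrite hcard in hn *; case: hn => hn.
rewrite -(IH _ hn (subset_trans (subsetDl _ _) FsTf)) bridge; lia.
Qed.

End SpanningTree.

End ContractedGraph.

Lemma card_Eset_sum (V : finType) (F : {set {set V}}) (A : {set V}) :
  #|Eset F A| = (\sum_(e in F) (e \subset A))%N.
Proof.
rewrite card_sum_mem [RHS]big_mkcond; apply: eq_bigr => e _.
by rewrite inE; case: (e \in F).
Qed.

Lemma mem_Eg (V : finType) (E F : {set {set V}}) (A e : {set V}) : e \in Eg E F A ->
  [/\ e \in E, e \subset A & forall C, C \in children F A -> ~~ (e \subset C)].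
Proof.
rewrite !inE => /andP[/andP[he heA] /forallP hC]; split => // C hCA.
by have := hC C; rewrite hCA.
Qed.

Section ChildrenEdgeCount.
Variables (V : finType) (F T : {set {set V}}) (A : {set V}).
Hypothesis F_laminar : laminar F.
Hypothesis T_neq0 : forall e, e \in T -> e != set0.

Lemma card_Eset_children :
  #|Eset T A| = (#|Eg T F A| + \sum_(C in children F A) #|Eset T C|)%N.
Proof.
rewrite card_Eset_sum card_sum_mem; under [X in (_ + X)%N]eq_bigr do rewrite card_Eset_sum.
rewrite exchange_big /= [in LHS]big_mkcond [X in (_ + X)%N]big_mkcond -big_split /=.
apply: eq_bigr => e _; case: (boolP (e \in T)) => heT; last first.
  by rewrite !inE (negbTE heT).
rewrite (sum_children_subset F_laminar A (T_neq0 heT)) !inE heT /=.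
case: existsP => [[C /andP[hC heC]]|no_child].
  have [_ /proper_sub /(subset_trans heC) ->] := mem_children hC.
  by case: forall_inP => // /(_ C hC); rewrite heC.
rewrite addn0; case: forall_inP => [_|]; first by rewrite andbT.
by case=> C hC; apply/negP => heC; apply: no_child; exists C; rewrite hC.
Qed.

Lemma card_Eset_children_sub S : Eg T F A \subset Eset T S ->
  (#|Eg T F A| + \sum_(C in children F A) #|Eset T (S :&: C)| <= #|Eset T S|)%N.
Proof.
move=> crossing_in_S.
rewrite card_Eset_sum card_sum_mem; under [X in (_ + X)%N]eq_bigr do rewrite card_Eset_sum.
rewrite exchange_big /= [X in (_ <= X)%N]big_mkcond [X in (_ + X)%N]big_mkcond -big_split /=.
apply: leq_sum => e _; case: (boolP (e \in T)) => heT; last first.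
  by rewrite !inE (negbTE heT).
under eq_bigr do rewrite subsetI.
rewrite !inE heT /=; have [heS|heS] /= := boolP (e \subset S); last first.
  rewrite big1 // addn0 leqn0 eqb0; apply/negP => e_cross.
  have := subsetP crossing_in_S e; rewrite !inE heT /= e_cross (negbTE heS).
  by move=> /(_ isT).
rewrite (sum_children_subset F_laminar A (T_neq0 heT)).
case: existsP => [[C /andP[hC heC]]|_]; last by rewrite addn0 leq_b1.
by case: forall_inP => [/(_ C hC)|_]; rewrite ?heC ?andbF.
Qed.

(* The edges of [T] in [A] but in no child are one fewer than the children, and
   they all lie in [S]; add them to the edges in the traces [S :&: C]. *)
Lemma leq_card_Eset_children (S : {set V}) :
  (forall v, v \in A -> exists2 C, C \in children F A & v \in C) -> S \subset A ->
  Eg T F A \subset Eset T S -> (#|Eset T A| + 1 = #|A|)%N ->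
  (forall C, C \in children F A -> #|Eset T C| + 1 = #|C|)%N ->
  (forall C, C \in children F A -> #|S :&: C| <= #|Eset T (S :&: C)| + 1)%N ->
  (#|S| <= #|Eset T S| + 1)%N.
Proof.
move=> A_cover SA crossing_in_S A_card C_card SC_card.
have children_card : (\sum_(C in children F A) (#|Eset T C| + 1) = #|A|)%N.
  rewrite -(sum_children_card F_laminar A_cover (subxx A)); apply: eq_bigr => C hC.
  by have [_ /proper_sub/setIidPr->] := mem_children hC; apply: C_card.
have S_card : (\sum_(C in children F A) #|S :&: C| = #|S|)%N.
  by rewrite -(sum_children_card F_laminar A_cover SA); apply: eq_bigr => C _; rewrite setIC.
have S_le : (#|S| <= \sum_(C in children F A) (#|Eset T (S :&: C)| + 1))%N.
  by rewrite -S_card; apply: leq_sum.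
move: children_card S_le; rewrite !big_split /= => children_card S_le.
move: A_card; rewrite card_Eset_children -children_card addnAC [RHS]addnC => /addIn m_eq.
apply: leq_trans S_le _; rewrite -m_eq addnA leq_add2r addnC.
exact: card_Eset_children_sub.
Qed.

End ChildrenEdgeCount.

Section TreeEdgeCount.
Variables (V : finType) (E L' : {set {set V}}) (Tf : {set V} -> {set {set V}}).
Hypothesis E_simple : simple_graph E.
Hypothesis L'_laminar : laminar L'.
Hypothesis L'_set1 : forall v, [set v] \in L'.
Hypothesis L'_neq0 : forall A, A \in L' -> A != set0.
Hypothesis Tf_tree : forall A, A \in L' -> spanning_tree_contr E L' A (Tf A).
Implicit Types (A B C : {set V}) (e : {set V}).

Let T := \bigcup_(A in L') Tf A.

Lemma tree_edge_Eg A e : A \in L' -> e \in Tf A -> e \in Eg E L' A.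
Proof. by move=> hA; have [/subsetP Tf_sub _] := Tf_tree hA; apply: Tf_sub. Qed.

Lemma tree_edge_E e : e \in T -> e \in E.
Proof. by case/bigcupP => A hA /(tree_edge_Eg hA) /mem_Eg[]. Qed.

Lemma tree_edge_neq0 e : e \in T -> e != set0.
Proof. by move/tree_edge_E/E_simple; rewrite -card_gt0 => ->. Qed.

Lemma Eg_tree A : A \in L' -> Eg T L' A = Tf A.
Proof.
move=> hA; apply/setP => e; apply/idP/idP => [heEg|heA]; last first.
  have [_ heA_sub heA_children] := mem_Eg (tree_edge_Eg hA heA).
  rewrite !inE heA_sub (subsetP (bigcup_sup _ hA)) //=.
  by apply/forall_inP => C /heA_children.
have [heT e_subA e_nochild] := mem_Eg heEg; have /bigcupP[B hB heB] := heT.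
have [_ heB_sub heB_children] := mem_Eg (tree_edge_Eg hB heB).
have [<-|hBA] := eqVneq B A; first by [].
case/or3P: (L'_laminar hA hB) => hAB.
- have AB : A \proper B by rewrite properEneq eq_sym hBA.
  have [C hC hAC] := sub_child hA AB.
  by move: (heB_children C hC); rewrite (subset_trans e_subA hAC).
- have BA : B \proper A by rewrite properEneq hBA.
  have [C hC hBC] := sub_child hB BA.
  by move: (e_nochild C hC); rewrite (subset_trans heB_sub hBC).
- have /set0Pn[v hv] := tree_edge_neq0 heT.
  move: hAB; rewrite disjoint_subset => /subsetP/(_ v).
  by rewrite (subsetP e_subA) // inE /= (subsetP heB_sub) // => /(_ isT).
Qed.

Lemma card_Eset_tree_laminar A : A \in L' -> (#|Eset T A| + 1 = #|A|)%N.
Proof.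
elim: {A}#|A| {-2}A (leqnn #|A|) => [|n IH] A hAn hA.
  by move: (L'_neq0 hA); rewrite -card_gt0; move: hAn; rewrite leqn0 => /eqP->.
have [hA1|hA1] := leqP #|A| 1.
  have -> : Eset T A = set0.
    apply/setP => e; rewrite !inE; apply/negbTE/negP => /andP[/tree_edge_E he].
    by move/subset_leq_card; rewrite (E_simple he) => /leq_trans/(_ hA1).
  by apply/eqP; rewrite cards0 eqn_leq hA1 card_gt0 L'_neq0.
have A_cover v : v \in A -> exists2 C, C \in children L' A & v \in C.
  exact: children_cover.
have children_neq0 C : C \in children L' A -> C != set0.
  by case/mem_children => /L'_neq0.
have tree_card := spanning_tree_contr_card L'_laminar children_neq0 A_cover E_simple
  (Tf_tree hA) (L'_neq0 hA).
have children_card C : C \in children L' A -> (#|Eset T C| + 1 = #|C|)%N.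
  move=> hC; have [hCL hCA] := mem_children hC; apply: IH => //.
  by rewrite -ltnS; apply: leq_trans (proper_card hCA) hAn.
have sum_card : (\sum_(C in children L' A) #|C| = #|A|)%N.
  rewrite -[RHS](sum_children_card L'_laminar A_cover (subxx A)).
  by apply: eq_bigr => C /mem_children[_ /proper_sub /setIidPr ->].
rewrite (card_Eset_children A L'_laminar tree_edge_neq0) Eg_tree // -sum_card.
rewrite -(eq_bigr _ children_card) big_split /= sum1_card -tree_card.
by rewrite addnAC [RHS]addnC.
Qed.

End TreeEdgeCount.

Local Open Scope ring_scope.

Section LinearInequalities.
Variables (R : realFieldType) (X : finType).

Local Notation ineq := ((X -> R) * R)%type.

Definition dot (a x : X -> R) := \sum_(i : X) a i * x i.

Definition excess (r : ineq) x := dot r.1 x - r.2.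

Definition sat (I : finType) (sys : I -> ineq) x := forall i, dot (sys i).1 x <= (sys i).2.

Definition join (I K : finType) (sA : I -> ineq) (sK : K -> ineq) (k : I + K) : ineq :=
  match k with inl i => sA i | inr k => sK k end.

(* Farkas certificates: [dot a x <= b] follows from [sys] by a nonnegative combination
   of its rows and a weakening of the right-hand side. *)
Inductive derivable (I : finType) (sys : I -> ineq) : (X -> R) -> R -> Prop :=
| derivable_row i : derivable sys (sys i).1 (sys i).2
| derivable_zero : derivable sys (fun _ => 0) 0
| derivable_add a b a' b' : derivable sys a b -> derivable sys a' b' ->
     derivable sys (fun j => a j + a' j) (b + b')
| derivable_scale k a b : 0 <= k -> derivable sys a b ->
     derivable sys (fun j => k * a j) (k * b)
| derivable_weaken a b b' : b <= b' -> derivable sys a b -> derivable sys a b'.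

Lemma dotD a a' x : dot (fun j => a j + a' j) x = dot a x + dot a' x.
Proof. by rewrite /dot -big_split; apply: eq_bigr => i _; rewrite mulrDl. Qed.

Lemma dotZ k a x : dot (fun j => k * a j) x = k * dot a x.
Proof. by rewrite /dot mulr_sumr; apply: eq_bigr => i _; rewrite mulrA. Qed.

Lemma dot0 x : dot (fun _ => 0) x = 0.
Proof. by rewrite /dot big1 // => i _; rewrite mul0r. Qed.

Lemma derivable_trans (I J : finType) (s1 : I -> ineq) (s2 : J -> ineq) a b :
  (forall i, derivable s2 (s1 i).1 (s1 i).2) -> derivable s1 a b -> derivable s2 a b.
Proof.
move=> h; elim => [i|||k a0 b0 hk _ IH|a0 b0 b1 hb _ IH].
- exact: h.
- exact: derivable_zero.
- by move=> *; apply: derivable_add.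
- exact: derivable_scale.
- exact: derivable_weaken IH.
Qed.

Lemma derivable_join_multipliers (I K : finType) (sA : I -> ineq) (sK : K -> ineq) a b :
  derivable (join sA sK) a b ->
  exists2 w : K -> R, (forall k, 0 <= w k) &
    forall x, sat sA x -> dot a x - b <= \sum_k w k * excess (sK k) x.
Proof.
elim => [[i|k]|||k0 a0 b0 hk _ [w hw IH]|a0 b0 b1 hb _ [w hw IH]].
- exists (fun _ => 0) => // x hx; rewrite big1 => [|k _]; last by rewrite mul0r.
  by rewrite subr_le0; apply: hx.
- exists (fun k' => (k' == k)%:R) => [k'|x _]; first exact: ler0n.
  rewrite (bigD1 k) //= eqxx mul1r big1 ?addr0 // => k' /negbTE ->.
  by rewrite mul0r.
- by exists (fun _ => 0) => // x _; rewrite dot0 subrr big1 // => k _; rewrite mul0r.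
- move=> a0 b0 a1 b1 _ [w1 hw1 IH1] _ [w2 hw2 IH2].
  exists (fun k => w1 k + w2 k) => [k|x hx]; first by rewrite addr_ge0.
  under eq_bigr do rewrite mulrDl.
  rewrite big_split dotD /=; have := lerD (IH1 x hx) (IH2 x hx); lra.
- exists (fun k => k0 * w k) => [k|x hx]; first by rewrite mulr_ge0.
  under eq_bigr do rewrite -mulrA.
  by rewrite -mulr_sumr dotZ -mulrBr ler_wpM2l // IH.
- by exists w => // x hx; apply: le_trans (IH x hx); rewrite lerB.
Qed.

Lemma exists_between_seq (ls us : seq R) :
  (forall l u, l \in ls -> u \in us -> l <= u) ->
  exists t, (forall l, l \in ls -> l <= t) /\ (forall u, u \in us -> t <= u).
Proof.
elim: ls => [|l ls IH] h.
  elim: us {h} => [|u us [t [_ ht]]]; first by exists 0.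
  exists (Num.min u t); split=> // u'; rewrite inE => /predU1P[->|hu].
    by rewrite ge_min lexx.
  by rewrite ge_min ht ?orbT.
have [t [ht1 ht2]] := IH (fun l0 u hl hu => h l0 u (@mem_behead _ (l :: ls) _ hl) hu).
exists (Num.max l t); split.
  move=> l0; rewrite inE => /predU1P[->|hl]; first by rewrite le_max lexx.
  by rewrite le_max (ht1 _ hl) orbT.
by move=> u hu; rewrite ge_max ht2 // h // inE eqxx.
Qed.

Definition upd (x : X -> R) j t i := if i == j then t else x i.

Lemma dot_upd a x j t : dot a (upd x j t) = dot a x - a j * x j + a j * t.
Proof.
rewrite /dot (bigD1 j) //= [in RHS](bigD1 j) //= /upd eqxx.
rewrite (eq_bigr (fun i => a i * x i)) => [|i /negbTE -> //]; lra.
Qed.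

(* Fourier-Motzkin elimination of the coordinate [j]: each pair of rows with
   [j]-th coefficients of opposite signs is combined so that they cancel. *)
Definition fm_eliminate (I : finType) (sys : I -> ineq) j (k : I + I * I) : ineq :=
  match k with
  | inl i => if (sys i).1 j == 0 then sys i else (fun _ => 0, 0)
  | inr (p, n) => if (0 < (sys p).1 j) && ((sys n).1 j < 0) then
      (fun i => - (sys n).1 j * (sys p).1 i + (sys p).1 j * (sys n).1 i,
       - (sys n).1 j * (sys p).2 + (sys p).1 j * (sys n).2)
      else (fun _ => 0, 0)
  end.

Section Elimination.
Variables (I : finType) (sys : I -> ineq) (j : X).

Lemma fm_eliminate_derivable k :
  derivable sys (fm_eliminate sys j k).1 (fm_eliminate sys j k).2.
Proof.
case: k => [i|[p n]] /=.
  by case: ifP => _; [apply: derivable_row | apply: derivable_zero].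
case: ifP => [/andP[hp hn]|_]; last exact: derivable_zero.
by apply: derivable_add; apply: derivable_scale; rewrite ?oppr_ge0 ?ltW //;
  apply: derivable_row.
Qed.

Lemma fm_eliminate_coord k : (fm_eliminate sys j k).1 j = 0.
Proof.
case: k => [i|[p n]] /=; first by case: ifP => // /eqP.
by case: ifP => // _ /=; rewrite mulNr mulrC addNr.
Qed.

Lemma fm_eliminate_support (s : pred X) k i :
  (forall i0 i, ~~ s i -> (sys i0).1 i = 0) -> ~~ s i -> (fm_eliminate sys j k).1 i = 0.
Proof.
move=> h hi; case: k => [i0|[p n]] /=; first by case: ifP => // _; apply: h.
by case: ifP => // _ /=; rewrite (h p i hi) (h n i hi) !mulr0 addr0.
Qed.

Variable x : X -> R.
Hypothesis x_sat : sat (fm_eliminate sys j) x.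

(* the value of the [j]-th coordinate that makes row [i] tight *)
Let bound i := ((sys i).2 - (dot (sys i).1 x - (sys i).1 j * x j)) / (sys i).1 j.

Lemma fm_bound_le p n : 0 < (sys p).1 j -> (sys n).1 j < 0 -> bound n <= bound p.
Proof.
move=> hp hn; have := x_sat (inr (p, n)); rewrite /= hp hn /= dotD !dotZ => h.
rewrite /bound ler_ndivrMr // mulrAC ler_pdivrMr //.
by nra.
Qed.

Lemma fm_eliminate_sat : exists t, sat sys (upd x j t).
Proof.
pose ls := [seq bound i | i <- enum I & (sys i).1 j < 0].
pose us := [seq bound i | i <- enum I & 0 < (sys i).1 j].
have [|t [ht1 ht2]] := @exists_between_seq ls us.
  move=> l u /mapP[n]; rewrite mem_filter => /andP[hn _] -> /mapP[p].
  by rewrite mem_filter => /andP[hp _] ->; apply: fm_bound_le.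
exists t => i; rewrite dot_upd.
case: (ltgtP ((sys i).1 j) 0) => [hn|hp|hz].
- have : bound i <= t by apply: ht1; apply/mapP; exists i; rewrite // mem_filter hn mem_enum.
  by rewrite /bound ler_ndivrMr // -lerBrDl mulrC.
- have : t <= bound i by apply: ht2; apply/mapP; exists i; rewrite // mem_filter hp mem_enum.
  by rewrite /bound ler_pdivlMr // -lerBrDl mulrC.
- by have := x_sat (inl i); rewrite /= hz eqxx !mul0r subr0 addr0.
Qed.

End Elimination.

Lemma farkas_support (s : seq X) (I : finType) (sys : I -> ineq) :
  (forall i0 i, i \notin s -> (sys i0).1 i = 0) ->
  (forall x, ~ sat sys x) -> exists2 b, b < 0 & derivable sys (fun _ => 0) b.
Proof.
elim: s I sys => [|j s IH] I sys hsupp hinf.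
  have [i hi|hall] := pickP (fun i => (sys i).2 < 0).
    exists (sys i).2 => //.
    have <- : (sys i).1 = (fun _ => 0) by apply/funext => k; apply: hsupp.
    exact: derivable_row.
  case: (hinf (fun _ => 0)) => i; rewrite /dot big1 => [|k _]; last by rewrite mulr0.
  by rewrite leNgt hall.
have hinf' x : ~ sat (fm_eliminate sys j) x.
  by case/fm_eliminate_sat => t /hinf.
have hsupp' k i : i \notin s -> (fm_eliminate sys j k).1 i = 0.
  move=> hi; have [->|hij] := eqVneq i j; first exact: fm_eliminate_coord.
  apply: (@fm_eliminate_support _ _ _ (mem (j :: s))); last by rewrite inE negb_or hij.
  by move=> i0 i1; apply: hsupp.
have [b hb hd] := IH _ _ hsupp' hinf'.
by exists b => //; apply: derivable_trans hd => k; apply: fm_eliminate_derivable.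
Qed.

Theorem farkas (I : finType) (sys : I -> ineq) :
  (forall x, ~ sat sys x) -> exists2 b, b < 0 & derivable sys (fun _ => 0) b.
Proof. by apply: (@farkas_support (enum X)) => i0 i; rewrite mem_enum. Qed.

Lemma lagrangian_bound (I K : finType) (sA : I -> ineq) (sK : K -> ineq) a s :
  (exists x0, sat sA x0 /\ sat sK x0) ->
  (forall x, sat sA x -> sat sK x -> s < dot a x) ->
  exists2 w : K -> R, (forall k, 0 <= w k) &
    exists2 d, 0 < d & forall x, sat sA x ->
      s + d <= dot a x + \sum_k w k * excess (sK k) x.
Proof.
move=> [x0 [x0A x0K]] a_gt.
pose sK' (k : K + unit) := if k is inl k then sK k else (a, s).
have [|beta beta_lt0 hd] := @farkas _ (join sA sK').
  move=> x hx; have := a_gt x (fun i => hx (inl i)) (fun k => hx (inr (inl k))).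
  by rewrite ltNge (hx (inr (inr tt))).
have [w w_ge0 hw] := derivable_join_multipliers hd.
pose mu := w (inr tt).
have mult_ge x : sat sA x ->
    - beta <= \sum_k w (inl k) * excess (sK k) x + mu * (dot a x - s).
  move=> /hw; rewrite dot0 sub0r big_sumType /= (big_pred1 tt) // => -[].
(* the row [dot a x <= s] gets a positive weight as [x0] satisfies all the others *)
have mu_gt0 : 0 < mu.
  rewrite lt_def w_ge0 andbT; apply: contraTneq (mult_ge x0 x0A) => ->.
  rewrite mul0r addr0 -ltNge; apply: le_lt_trans (_ : 0 < - beta); last first.
    by rewrite oppr_gt0.
  apply: sumr_le0 => k _; apply: mulr_ge0_le0 => //.
  by rewrite subr_le0; apply: x0K.
exists (fun k => w (inl k) / mu) => [k|]; first by rewrite divr_ge0 // ltW.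
exists (- beta / mu); first by rewrite divr_gt0 // oppr_gt0.
move=> x /mult_ge; set S := \sum_k _; set ax := dot a x => hx.
rewrite (eq_bigr (fun k => w (inl k) * excess (sK k) x / mu)) => [|k _]; last first.
  by rewrite mulrAC.
rewrite -mulr_suml -/S -subr_ge0.
have -> : ax + S / mu - (s + - beta / mu) = (S + mu * (ax - s) + beta) / mu.
  by field; rewrite gt_eqF.
by rewrite divr_ge0 ?(ltW mu_gt0) //; lra.
Qed.

End LinearInequalities.

Lemma lp_min_attained (R : realType) (X I : finType) (sA : I -> (X -> R) * R) a lb :
  (exists x0, sat sA x0) -> (forall x, sat sA x -> lb <= dot a x) ->
  exists2 x, sat sA x & forall x', sat sA x' -> dot a x <= dot a x'.
Proof.
move=> [x0 x0A] a_ge.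
pose vals := fun r => exists2 x, sat sA x & dot a x = r.
have vals_lb : classical_sets.has_lbound vals by exists lb => r [x hx <-]; apply: a_ge.
have inf_le x : sat sA x -> inf vals <= dot a x.
  by move=> hx; apply: (ge_inf vals_lb); exists x.
have [[x hx x_le]|no_min] := pselect (exists2 x, sat sA x & dot a x <= inf vals).
  by exists x => // x' /inf_le; apply: le_trans.
pose no_constraints (v : void) : (X -> R) * R := match v with end.
have x0_sat : exists x0, sat sA x0 /\ sat no_constraints x0 by exists x0; split => // [[]].
have inf_lt x : sat sA x -> sat no_constraints x -> inf vals < dot a x.
  by move=> hx _; rewrite ltNge; apply/negP => hle; apply: no_min; exists x.
have [w _ [d d_gt0 hd]] := lagrangian_bound x0_sat inf_lt.
have : inf vals + d <= inf vals.
  apply: lb_le_inf; first by exists (dot a x0); exists x0.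
  move=> r [x hx <-]; apply: le_trans (hd x hx) _.
  by rewrite big_pred0 ?addr0 // => -[].
by rewrite gerDl leNgt d_gt0.
Qed.

Section LagrangianDuality.
Variables (R : realType) (V : finType) (E : {set {set V}}).
Implicit Types (F : {set {set V}}) (x a : {set V} -> R).

Definition restrict F a e := if e \in F then a e else 0.

Lemma dot_restrict F a x : dot (restrict F a) x = \sum_(e in F) a e * x e.
Proof.
rewrite /dot [RHS]big_mkcond; apply: eq_bigr => e _.
by rewrite /restrict; case: (e \in F); rewrite ?mul0r.
Qed.

Lemma dot_indicator F x : dot (restrict F (fun _ => 1)) x = xsum x F.
Proof. by rewrite dot_restrict; apply: eq_bigr => e _; rewrite mul1r. Qed.

Lemma dotN a x : dot (fun e => - a e) x = - dot a x.
Proof. by rewrite /dot -sumrN; apply: eq_bigr => e _; rewrite mulNr. Qed.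

Let zero_row : ({set V} -> R) * R := (fun _ => 0, 0).

Definition pst_system (k : ({set V} + {set V}) + bool) : ({set V} -> R) * R :=
  match k with
  | inl (inl e) => if e \in E then (fun f => - restrict [set e] (fun _ => 1) f, 0)
                   else zero_row
  | inl (inr A) => if (A != set0) && (A \proper [set: V])
                   then (restrict (Eset E A) (fun _ => 1), #|A|%:R - 1) else zero_row
  | inr true => (restrict E (fun _ => 1), #|V|%:R - 1)
  | inr false => (fun f => - restrict E (fun _ => 1) f, - (#|V|%:R - 1))
  end.

Lemma sat_pst_system x : sat pst_system x <-> in_PST E x.
Proof.
have zero_row_sat : dot zero_row.1 x <= zero_row.2 by rewrite dot0.
split => [h|[x_ge0 [x_subtour x_E]] [[e|A]|[]] /=].
- split; [|split].
  + move=> e he; have := h (inl (inl e)); rewrite /= he dotN dot_indicator.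
    by rewrite /xsum big_set1 oppr_le0.
  + by move=> A hA hAp; have := h (inl (inr A)); rewrite /= hA hAp dot_indicator.
  + have := h (inr true); have := h (inr false).
    rewrite /= dotN !dot_indicator lerN2 => h1 h2.
    by apply/eqP; rewrite eq_le h1 h2.
- case: ifP => he //.
  by rewrite dotN dot_indicator /xsum big_set1 oppr_le0 x_ge0.
- by case: ifP => // /andP[hA hAp]; rewrite dot_indicator x_subtour.
- by rewrite dot_indicator x_E.
- by rewrite dotN dot_indicator x_E.
Qed.

Variables (Sc : {set {set V}}) (b : {set V} -> int) (lam : R) (c : {set V} -> R).

Lemma cy_sumE y x : \sum_(e in E) cy E Sc c y e * x e =
  \sum_(e in E) c e * x e + \sum_(S in Sc) y S * xsum x (dset E S).
Proof.
rewrite /cy; under eq_bigr do rewrite mulrDl mulr_suml.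
rewrite big_split /= (exchange_big_dep (mem Sc)) /=; last by move=> e S _ /andP[].
congr (_ + _); apply: eq_bigr => S hS; rewrite /xsum mulr_sumr.
by apply: eq_bigl => e; rewrite hS inE /=; case: (e \in E).
Qed.

Lemma gobjE y x : gobj E Sc b lam c y x =
  \sum_(e in E) c e * x e + \sum_(S in Sc) y S * (xsum x (dset E S) - lam * (b S)%:~R).
Proof.
rewrite /gobj cy_sumE -addrA; congr (_ + _).
by rewrite mulr_sumr -sumrB; apply: eq_bigr => S _; ring.
Qed.

Lemma g_value_ge y lb : (exists x0, in_PST E x0) ->
  (forall x, in_PST E x -> lb <= gobj E Sc b lam c y x) ->
  exists2 v, is_g_value E Sc b lam c y v & lb <= v.
Proof.
move=> [x0 /sat_pst_system x0_sat] lb_le.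
pose C := lam * \sum_(S in Sc) (b S)%:~R * y S.
have gobj_dot x : gobj E Sc b lam c y x = dot (restrict E (cy E Sc c y)) x - C.
  by rewrite dot_restrict.
have dot_ge x : sat pst_system x -> lb + C <= dot (restrict E (cy E Sc c y)) x.
  by move=> /sat_pst_system /lb_le; rewrite gobj_dot lerBrDr.
have [x x_sat x_min] := lp_min_attained (ex_intro _ x0 x0_sat) dot_ge.
exists (gobj E Sc b lam c y x); last exact/lb_le/sat_pst_system.
split; first by exists x; split => //; apply/sat_pst_system.
by move=> x' /sat_pst_system /x_min; rewrite !gobj_dot lerD2r.
Qed.

Definition cut_system (S : {set V}) : ({set V} -> R) * R :=
  if S \in Sc then (restrict (dset E S) (fun _ => 1), lam * (b S)%:~R) else zero_row.

Lemma sat_cut_system x :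
  sat cut_system x <-> forall S, S \in Sc -> xsum x (dset E S) <= lam * (b S)%:~R.
Proof.
split => [h S hS|h S]; first by have := h S; rewrite /cut_system hS dot_indicator.
by rewrite /cut_system; case: ifP => [hS|_]; rewrite ?dot_indicator ?h ?dot0.
Qed.

Lemma sum_cut_excess w x : \sum_S w S * excess (cut_system S) x =
  \sum_(S in Sc) w S * (xsum x (dset E S) - lam * (b S)%:~R).
Proof.
rewrite [RHS]big_mkcond; apply: eq_bigr => S _; rewrite /excess /cut_system.
by case: ifP => _; rewrite ?dot_indicator // dot0 subr0 mulr0.
Qed.

Lemma primal_le_dual x_opt v :
  (exists x, feasible E Sc b lam x) -> opt_primal E Sc b lam c x_opt ->
  (forall y v', nonneg_on Sc y -> is_g_value E Sc b lam c y v' -> v' <= v) ->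
  lin_cost E c x_opt <= v.
Proof.
move=> [x0 [x0_pst x0_cut]] [_ x_opt_min] v_max.
apply/ler_addgt0Pr => eps eps_gt0; rewrite -lerBlDr.
have x0_sat : exists x, sat pst_system x /\ sat cut_system x.
  by exists x0; split; [apply/sat_pst_system|apply/sat_cut_system].
have cost_gt x : sat pst_system x -> sat cut_system x ->
    lin_cost E c x_opt - eps < dot (restrict E c) x.
  move=> /sat_pst_system x_pst /sat_cut_system x_cut.
  rewrite dot_restrict ltrBlDr; apply: le_lt_trans (x_opt_min x _) _; first by split.
  by rewrite ltrDl.
have [w w_ge0 [d d_gt0 hd]] := lagrangian_bound x0_sat cost_gt.
have gobj_ge x : in_PST E x -> lin_cost E c x_opt - eps <= gobj E Sc b lam c w x.
  move=> /sat_pst_system /hd; rewrite dot_restrict sum_cut_excess -gobjE.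
  by apply: le_trans; rewrite lerDl ltW.
have [v' v'_g le_v'] := g_value_ge (ex_intro _ x0 x0_pst) gobj_ge.
by apply: le_trans le_v' (v_max _ _ _ v'_g) => S _.
Qed.

Lemma complementary_slackness x_opt y_opt :
  (exists x, feasible E Sc b lam x) -> opt_primal E Sc b lam c x_opt ->
  opt_dual E Sc b lam c y_opt ->
  \sum_(S in Sc) y_opt S * xsum x_opt (dset E S) = lam * \sum_(S in Sc) (b S)%:~R * y_opt S /\
  forall x, in_PST E x ->
    \sum_(e in E) cy E Sc c y_opt e * x_opt e <= \sum_(e in E) cy E Sc c y_opt e * x e.
Proof.
move=> feas x_opt_opt [y_ge0 [v [[_ v_min] v_max]]].
have [[x_opt_pst x_opt_cut] _] := x_opt_opt.
have primal_le := primal_le_dual feas x_opt_opt v_max.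
have := v_min _ x_opt_pst; rewrite gobjE -/(lin_cost E c x_opt).
set D := \sum_(S in Sc) _ => dual_le.
have D_le0 : D <= 0.
  apply: sumr_le0 => S hS; apply: mulr_ge0_le0; first exact: y_ge0.
  by rewrite subr_le0 x_opt_cut.
have DE : D = \sum_(S in Sc) y_opt S * xsum x_opt (dset E S) -
    lam * \sum_(S in Sc) (b S)%:~R * y_opt S.
  by rewrite /D mulr_sumr -sumrB; apply: eq_bigr => S _; ring.
have slack : \sum_(S in Sc) y_opt S * xsum x_opt (dset E S) =
    lam * \sum_(S in Sc) (b S)%:~R * y_opt S by lra.
split => // x /v_min; rewrite /gobj (cy_sumE y_opt x_opt) slack -/(lin_cost E c x_opt).
lra.
Qed.

End LagrangianDuality.

Section TightSets.
Variables (R : realType) (V : finType) (E : {set {set V}}).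
Hypothesis E_simple : simple_graph E.
Implicit Types (F : {set {set V}}) (A B C S : {set V}) (x : {set V} -> R).

Lemma xsum_Eset x S : xsum x (Eset E S) = \sum_(e in E) (e \subset S)%:R * x e.
Proof.
rewrite /xsum big_mkcond [RHS]big_mkcond; apply: eq_bigr => e _.
by rewrite inE; case: (e \in E); case: (e \subset S); rewrite ?mul1r ?mul0r.
Qed.

Lemma xsum_EsetT x : xsum x (Eset E [set: V]) = xsum x E.
Proof. by apply: eq_bigl => e; rewrite inE subsetT andbT. Qed.

Lemma pst_Eset_le x S : in_PST E x -> S != set0 -> xsum x (Eset E S) <= #|S|%:R - 1.
Proof.
move=> [_ [x_subtour x_E]] hS; have [->|hT] := eqVneq S [set: V].
  by rewrite xsum_EsetT x_E cardsT.
by apply: x_subtour; rewrite ?properT.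
Qed.

Section LaminarDecomposition.
Variables (x : {set V} -> R) (F : {set {set V}}).
Hypothesis x_pst : in_PST E x.
Hypothesis F_decomp : laminar_decomp E x F.

Lemma ld_laminar : laminar F. Proof. by case: F_decomp. Qed.

Lemma ld_tight A : A \in F -> tight E x A. Proof. by case: F_decomp => _ [h _]; apply: h. Qed.

Lemma ld_neq0 A : A \in F -> A != set0. Proof. by move/ld_tight/andP => []. Qed.

Lemma ld_maximal A : tight E x A ->
  (forall B, B \in F -> [|| A \subset B, B \subset A | [disjoint A & B]]) -> A \in F.
Proof.
move=> hA hB; have [F_lam [F_tight F_max]] := F_decomp.
have tight_AF B : B \in A |: F -> tight E x B.
  by rewrite !inE => /predU1P[->|/F_tight].
by rewrite -(F_max _ (laminar_setU1 F_lam hB) tight_AF (subsetU1 _ _)) setU11.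
Qed.

Lemma ld_set1 v : [set v] \in F.
Proof.
apply: ld_maximal => [|B _]; last first.
  by case hv: (v \in B); rewrite ?sub1set ?hv // disjoints1 hv !orbT.
rewrite /tight; apply/andP; split; first by apply/set0Pn; exists v; rewrite inE.
rewrite cards1 subrr /xsum big_pred0 // => e; rewrite inE.
by apply/negP => /andP[/E_simple he /subset_leq_card]; rewrite he cards1.
Qed.

Lemma ld_setT : #|V| != 0%N -> [set: V] \in F.
Proof.
move=> hV; apply: ld_maximal => [|B _]; last by rewrite subsetT orbT.
by have [_ [_ x_E]] := x_pst; rewrite /tight -card_gt0 cardsT lt0n hV xsum_EsetT x_E eqxx.
Qed.

End LaminarDecomposition.

(* x(E(A :|: B)) + x(E(A :&: B)) is x(E(A)) + x(E(B)) plus the weight of the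
   edges between A :\: B and B :\: A; the subtour bounds then force equality. *)
Lemma tight_uncross x A B : in_PST E x -> tight E x A -> tight E x B -> A :&: B != set0 ->
  [/\ tight E x (A :|: B), tight E x (A :&: B) &
    forall e, e \in E -> e \subset A :|: B -> ~~ (e \subset A) -> ~~ (e \subset B) -> x e = 0].
Proof.
move=> x_pst /andP[hA0 /eqP hA] /andP[hB0 /eqP hB] hI.
have hU0 : A :|: B != set0.
  by case/set0Pn: hA0 => v hv; apply/set0Pn; exists v; rewrite inE hv.
pose cr (e : {set V}) := [&& e \subset A :|: B, ~~ (e \subset A) & ~~ (e \subset B)].
have cr_ind (e : {set V}) : (e \subset A :|: B)%:R = (e \subset A)%:R + (e \subset B)%:R
    - (e \subset A :&: B)%:R + (cr e)%:R :> R.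
  rewrite subsetI /cr.
  case ha: (e \subset A); case hb: (e \subset B) => /=.
  - by rewrite (subset_trans ha) ?subsetUl //= addrK addr0.
  - by rewrite (subset_trans ha) ?subsetUl //= !addr0 subr0.
  - by rewrite (subset_trans hb) ?subsetUr //= !add0r subr0 addr0.
  - by case: (e \subset A :|: B); rewrite /= !add0r ?subr0 ?oppr0 ?add0r.
have modular : xsum x (Eset E (A :|: B)) = xsum x (Eset E A) + xsum x (Eset E B)
    - xsum x (Eset E (A :&: B)) + \sum_(e in E) (cr e)%:R * x e.
  rewrite !xsum_Eset -big_split /= -sumrB -big_split /=.
  by apply: eq_bigr => e _; rewrite cr_ind; ring.
have cr_ge0 (e : {set V}) : e \in E -> 0 <= (cr e)%:R * x e.
  by have [x_ge0 _] := x_pst; move=> he; rewrite mulr_ge0 ?ler0n ?x_ge0.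
have hcr0 : 0 <= \sum_(e in E) (cr e)%:R * x e by apply: sumr_ge0 => e; apply: cr_ge0.
have hUle := pst_Eset_le x_pst hU0; have hIle := pst_Eset_le x_pst hI.
have hcard : (#|A :|: B|%:R + #|A :&: B|%:R : R) = #|A|%:R + #|B|%:R.
  by rewrite -!natrD cardsUI.
have cr0 : \sum_(e in E) (cr e)%:R * x e = 0 by lra.
split; rewrite /tight ?hU0 ?hI /=; try by apply/eqP; lra.
move=> e he heU heA heB.
by have := psumr_eq0P cr_ge0 cr0 he; rewrite /cr heU heA heB mul1r.
Qed.

End TightSets.

Section TightSetStructure.
Variables (R : realType) (V : finType) (E : {set {set V}}) (x : {set V} -> R).
Hypothesis E_simple : simple_graph E.
Hypothesis x_pst : in_PST E x.
Implicit Types (A B C S : {set V}).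

Lemma tight_bigcup S (Q : {set {set V}}) : tight E x S ->
  (forall C, C \in Q -> tight E x C /\ C :&: S != set0) -> tight E x (S :|: \bigcup_(C in Q) C).
Proof.
move=> hS hQ; rewrite -big_enum.
have : forall C, C \in enum Q -> tight E x C /\ C :&: S != set0.
  by move=> C; rewrite mem_enum; apply: hQ.
elim: (enum Q) => [|C cs IH] hcs; first by rewrite big_nil setU0.
rewrite big_cons setUCA setUC.
have [hC hCS] := hcs C (mem_head _ _).
have hU := IH (fun C' hC' => hcs C' (mem_behead (hC' : C' \in behead (C :: cs)))).
have hne : (S :|: \bigcup_(C0 <- cs) C0) :&: C != set0.
  case/set0Pn: hCS => v; rewrite !inE => /andP[h1 h2].
  by apply/set0Pn; exists v; rewrite !inE h1 h2.
by case: (tight_uncross x_pst hU hC hne).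
Qed.

(* If [p \notin S], the positive-weight edge [e] crosses between intersecting tight
   sets, contradicting [tight_uncross]: [S] and [Cp] if [q \in S], else [S :|: Cp] and [Cq]. *)
Lemma tight_edge_end S Cp Cq e p q :
  tight E x S -> tight E x Cp -> tight E x Cq -> S :&: Cp != set0 -> S :&: Cq != set0 ->
  e \in E -> 0 < x e -> e = [set p; q] -> p \in Cp -> q \in Cq -> p \notin Cq -> q \notin Cp ->
  p \in S.
Proof.
move=> hS hCp hCq hSCp hSCq heE xe_gt0 def_e hpC hqC hpCq hqCp; apply: contraT => hpS.
suff : x e = 0 by move/eqP; rewrite (gt_eqF xe_gt0).
have sub_pq (X : {set V}) : (e \subset X) = (p \in X) && (q \in X).
  by rewrite def_e subUset !sub1set.
have [hSCp_tight _ xS_Cp] := tight_uncross x_pst hS hCp hSCp.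
have [hqS|hqS] := boolP (q \in S).
  apply: xS_Cp; rewrite // !sub_pq.
  - by rewrite !inE hpC hqS orbT.
  - by rewrite (negbTE hpS).
  - by rewrite (negbTE hqCp) andbF.
have hXC : (S :|: Cp) :&: Cq != set0.
  case/set0Pn: hSCq => v; rewrite !inE => /andP[h1 h2].
  by apply/set0Pn; exists v; rewrite !inE h1 h2.
have [_ _ xSCp_Cq] := tight_uncross x_pst hSCp_tight hCq hXC.
apply: xSCp_Cq; rewrite // !sub_pq.
- by rewrite !inE hpC hqC !orbT.
- by rewrite !inE (negbTE hqS) (negbTE hqCp) andbF.
- by rewrite (negbTE hpCq).
Qed.

Section Decomposition.
Variable L : {set {set V}}.
Hypothesis L_decomp : laminar_decomp E x L.

Definition children_meeting S A := \bigcup_(C in [set C in children L A | C :&: S != set0]) C.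

Lemma mem_children_meeting S A v : (v \in children_meeting S A) =
  [exists C in children L A, (C :&: S != set0) && (v \in C)].
Proof.
apply/bigcupP/existsP => [[C]|[C /and3P[hC hCS hv]]]; last by exists C; rewrite // inE hC.
by rewrite inE => /andP[hC hCS] hv; exists C; rewrite hC hCS.
Qed.

Lemma children_meeting_sub S A : children_meeting S A \subset A.
Proof. by apply/bigcupsP => C; rewrite inE => /andP[/mem_children[_ /proper_sub]]. Qed.

Lemma ld_join_children S A : tight E x S -> A \in L -> S \subset A ->
  S :|: children_meeting S A \in L.
Proof.
move=> hS hA hSA; have L_lam := ld_laminar L_decomp.
have ZA : S :|: children_meeting S A \subset A by rewrite subUset hSA children_meeting_sub.
apply: (ld_maximal L_decomp).
  apply: tight_bigcup => // C; rewrite inE => /andP[hC hCS]; split => //.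
  by have [/(ld_tight L_decomp)] := mem_children hC.
move=> B hB; case/or3P: (L_lam _ _ hA hB) => hAB.
- by rewrite (subset_trans ZA hAB).
- have [->|hBA] := eqVneq B A; first by rewrite ZA.
  have BA : B \proper A by rewrite properEneq hBA.
  have [C hC hBC] := sub_child hB BA.
  have [hCS|hCS] := boolP (C :&: S != set0).
    apply/orP; right; apply/orP; left; apply/subsetP => v hv.
    rewrite inE mem_children_meeting; apply/orP; right.
    by apply/existsP; exists C; rewrite hC hCS (subsetP hBC).
  apply/orP; right; apply/orP; right; rewrite disjoint_subset; apply/subsetP => v.
  rewrite inE mem_children_meeting !inE => /orP[hvS|/existsP[C' /and3P[hC' hC'S hvC']]];
    apply/negP => hvB.
    by case/negP: hCS; apply/set0Pn; exists v; rewrite inE hvS (subsetP hBC).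
  by move: hC'S; rewrite (children_mem_uniq L_lam hC' hC hvC' (subsetP hBC v hvB)) (negbTE hCS).
- by rewrite (disjointWl ZA hAB) !orbT.
Qed.

(* Taking [A] smallest in [L] around [S], the join of [S] with the children of
   [A] meeting it is in [L], hence is [A] itself. *)
Lemma ld_children_meet S A : tight E x S -> A \in L -> S \subset A ->
  (forall B, B \in L -> S \subset B -> (#|A| <= #|B|)%N) ->
  forall C, C \in children L A -> C :&: S != set0.
Proof.
move=> hS hA hSA A_min C hC.
have joinA : S :|: children_meeting S A = A.
  apply/eqP; rewrite eqEcard subUset hSA children_meeting_sub /=.
  by apply: A_min; [apply: ld_join_children | apply: subsetUl].
have [hCL /proper_sub/subsetP CA] := mem_children hC.
have /set0Pn[v hv] := ld_neq0 L_decomp hCL.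
move: (CA v hv); rewrite -joinA inE mem_children_meeting.
case/orP => [hvS|/existsP[C' /and3P[hC' hC'S hvC']]].
  by apply/set0Pn; exists v; rewrite inE hv hvS.
by rewrite -(children_mem_uniq (ld_laminar L_decomp) hC' hC hvC' hv).
Qed.

Lemma ld_crossing_edge_sub S A e : tight E x S -> A \in L -> (1 < #|A|)%N ->
  (forall C, C \in children L A -> C :&: S != set0) ->
  e \in Eg E L A -> 0 < x e -> e \subset S.
Proof.
move=> hS hA hA1 meetS heEg xe_gt0; have L_lam := ld_laminar L_decomp.
have [heE heA e_nochild] := mem_Eg heEg.
have /eqP/cards2P[p [q [_ def_e]]] := E_simple heE.
have [hpA hqA] : p \in A /\ q \in A by move: heA; rewrite def_e subUset !sub1set => /andP[].
have cover v : v \in A -> exists2 C, C \in children L A & v \in C.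
  by apply: children_cover => // u; apply: (ld_set1 E_simple L_decomp).
have [[Cp hCp hpC] [Cq hCq hqC]] := (cover p hpA, cover q hqA).
have CpCq : Cp != Cq.
  by apply: contraNneq (e_nochild Cp hCp) => CpCq; rewrite def_e subUset !sub1set hpC CpCq hqC.
have hpCq : p \notin Cq by apply: contra CpCq => /(children_mem_uniq L_lam hCp hCq hpC) ->.
have hqCp : q \notin Cp.
  by apply: contra CpCq => /(children_mem_uniq L_lam hCq hCp hqC) ->.
have tight_child C : C \in children L A -> tight E x C.
  by case/mem_children => /(ld_tight L_decomp).
have meet C : C \in children L A -> S :&: C != set0 by move/meetS; rewrite setIC.
rewrite def_e subUset !sub1set.
rewrite (tight_edge_end hS (tight_child _ hCp) (tight_child _ hCq) (meet _ hCp) (meet _ hCq)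
  heE xe_gt0 def_e) //=.
by rewrite (tight_edge_end hS (tight_child _ hCq) (tight_child _ hCp) (meet _ hCq) (meet _ hCp)
  heE xe_gt0 (etrans def_e (setUC _ _))).
Qed.

End Decomposition.
End TightSetStructure.

Section TreeInTightSets.
Variables (R : realType) (V : finType) (E : {set {set V}}) (x : {set V} -> R).
Variables (L L' : {set {set V}}) (Tf : {set V} -> {set {set V}}).
Hypothesis E_simple : simple_graph E.
Hypothesis x_pst : in_PST E x.
Hypothesis L_decomp : laminar_decomp E x L.
Hypothesis L'_laminar : laminar L'.
Hypothesis L'_set1 : forall v, [set v] \in L'.
Hypothesis L'_neq0 : forall A, A \in L' -> A != set0.
Hypothesis Tf_tree : forall A, A \in L' -> spanning_tree_contr E L' A (Tf A).
Hypothesis LL' : L \subset L'.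
Hypothesis V_neq0 : #|V| != 0%N.

Implicit Types (A B C S : {set V}).

Let T := \bigcup_(A in L') Tf A.
Hypothesis T_pos : forall e, e \in T -> 0 < x e.

Lemma ld_min_superset S : exists2 A, A \in L /\ S \subset A &
  forall B, B \in L -> S \subset B -> (#|A| <= #|B|)%N.
Proof.
pose P A := (A \in L) && (S \subset A).
have PT : P [set: V] by rewrite /P (ld_setT x_pst) ?subsetT.
case: (arg_minnP (fun A => #|A|) PT) => A /andP[hA hSA] A_min.
by exists A => // B hB hSB; apply: A_min; rewrite /P hB hSB.
Qed.

Lemma card_tree : (#|T| + 1 = #|V|)%N.
Proof.
have EsetT : Eset T [set: V] = T by apply/setP => e; rewrite !inE subsetT andbT.
rewrite -cardsT -EsetT.
apply: (card_Eset_tree_laminar E_simple L'_laminar L'_set1 L'_neq0 Tf_tree).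
exact/(subsetP LL')/(ld_setT x_pst).
Qed.

Lemma card_Eset_tree_tight S : tight E x S -> (#|S| <= #|Eset T S| + 1)%N.
Proof.
have laminar_card A : A \in L' -> (#|Eset T A| + 1 = #|A|)%N.
  exact: (card_Eset_tree_laminar E_simple L'_laminar L'_set1 L'_neq0 Tf_tree).
elim: {S}#|S| {-2}S (leqnn #|S|) => [|n IH] S hSn hS.
  by move: hS => /andP[]; rewrite -card_gt0; move: hSn; rewrite leqn0 => /eqP->.
have [A [hA hSA] A_min] := ld_min_superset S.
have [->|hSA'] := eqVneq S A; first by rewrite laminar_card ?(subsetP LL').
have L_lam := ld_laminar L_decomp.
have SA : S \proper A by rewrite properEneq hSA' hSA.
have hA1 : (1 < #|A|)%N.
  by apply: leq_trans (proper_card SA); rewrite ltnS card_gt0; case/andP: hS.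
have A_cover v : v \in A -> exists2 C, C \in children L A & v \in C.
  by apply: children_cover => // u; apply: (ld_set1 E_simple L_decomp).
have meetS := ld_children_meet x_pst L_decomp hS hA hSA A_min.
have crossing_in_S : Eg T L A \subset Eset T S.
  apply/subsetP => e /[dup] heEg; rewrite !inE => /andP[/andP[heT heA] no_child].
  rewrite heT (ld_crossing_edge_sub E_simple x_pst L_decomp hS hA hA1 meetS) ?T_pos //.
  by rewrite !inE (tree_edge_E Tf_tree heT) heA.
apply: (leq_card_Eset_children L_lam (tree_edge_neq0 E_simple Tf_tree) A_cover hSA
  crossing_in_S).
- exact/laminar_card/(subsetP LL').
- by move=> C /mem_children[/(subsetP LL') /laminar_card].
move=> C hC; have [hCL hCA] := mem_children hC.
have SC_neq0 : S :&: C != set0 by rewrite setIC meetS.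
have [_ hSC _] := tight_uncross x_pst hS (ld_tight L_decomp hCL) SC_neq0.
apply: IH hSC; rewrite -ltnS; apply: leq_trans hSn; rewrite proper_card //.
rewrite properEneq subsetIl andbT; apply: contraTneq (proper_card hCA) => SC.
by rewrite -leqNgt A_min // -SC subsetIr.
Qed.

End TreeInTightSets.

Lemma exists_pos_lower_bound (R : realDomainType) (I : finType) (P : pred I) (q : I -> R) :
  (forall i, P i -> 0 < q i) -> exists2 eps, 0 < eps & forall i, P i -> eps <= q i.
Proof.
move=> q_gt0.
suff [eps eps_gt0 eps_le] : exists2 eps, 0 < eps & forall i, i \in enum I -> P i -> eps <= q i.
  by exists eps => // i; apply: eps_le; rewrite mem_enum.
elim: (enum I) => [|j s [eps eps_gt0 eps_le]]; first by exists 1.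
have [Pj|nPj] := boolP (P j).
  exists (Num.min (q j) eps); first by rewrite lt_min eps_gt0 q_gt0.
  move=> i; rewrite inE => /predU1P[->|hi] hPi; first by rewrite ge_min lexx.
  by rewrite ge_min eps_le ?orbT.
exists eps => // i; rewrite inE => /predU1P[->|hi] hPi; last exact: eps_le.
by rewrite hPi in nPj.
Qed.

Section TreeInOptimalFace.
Variables (R : realType) (V : finType) (E T : {set {set V}}) (x : {set V} -> R).
Hypothesis x_pst : in_PST E x.
Hypothesis T_sub : T \subset E.
Hypothesis T_pos : forall e, e \in T -> 0 < x e.
Hypothesis T_card : (#|T| + 1 = #|V|)%N.
Hypothesis T_tight : forall S, tight E x S -> (#|S| <= #|Eset T S| + 1)%N.

Let perturb (eps : R) e := (1 + eps) * x e - eps * (e \in T)%:R.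

Lemma xsum_perturb eps F : xsum (perturb eps) F = (1 + eps) * xsum x F - eps * #|F :&: T|%:R.
Proof.
rewrite /xsum /perturb sumrB -!mulr_sumr card_sum_mem natr_sum; congr (_ - _ * _).
by rewrite big_mkcond; apply: eq_bigr => e _; rewrite inE; case: (e \in F).
Qed.

Lemma Eset_tree (S : {set V}) : Eset E S :&: T = Eset T S.
Proof.
apply/setP => e; rewrite !inE; case: (boolP (e \in T)) => heT; rewrite ?andbF //=.
by rewrite (subsetP T_sub) ?andbT.
Qed.

Let slack (S : {set V}) := #|S|%:R - 1 - xsum x (Eset E S).

(* [T] has at least [|S| - 1] edges inside a tight set [S], so the perturbation
   does not increase [x(E(S))]; the other subtour constraints have slack. *)
Lemma perturb_subtour eps (S : {set V}) : 0 < eps -> S != set0 -> S \proper [set: V] ->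
  (~~ tight E x S -> eps * (xsum x (Eset E S) + 1) <= slack S) ->
  xsum (perturb eps) (Eset E S) <= #|S|%:R - 1.
Proof.
move=> eps_gt0 hS0 hSp eps_le; have [x_ge0 [x_subtour _]] := x_pst.
have X_ge0 : 0 <= xsum x (Eset E S).
  by apply: sumr_ge0 => e; rewrite inE => /andP[/x_ge0].
rewrite xsum_perturb Eset_tree mulrDl mul1r.
have [tS|ntS] := boolP (tight E x S).
  move: (tS) => /andP[_ /eqP ->].
  have : (#|S|%:R - 1 : R) <= #|Eset T S|%:R by rewrite lerBlDr natr1 ler_nat -addn1 T_tight.
  by move=> /(ler_wpM2l (ltW eps_gt0)); lra.
have : 0 <= eps * #|Eset T S|%:R by rewrite mulr_ge0 // ltW.
have := eps_le ntS; rewrite /slack mulrDr mulr1; lra.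
Qed.

Lemma perturb_pst : exists2 eps, 0 < eps & in_PST E (perturb eps).
Proof.
have [x_ge0 [x_subtour x_E]] := x_pst.
pose P (k : {set V} + {set V}) := match k with
  | inl e => e \in T
  | inr A => [&& A != set0, A \proper [set: V] & ~~ tight E x A] end.
pose q (k : {set V} + {set V}) := match k with
  | inl e => x e
  | inr A => slack A / (xsum x (Eset E A) + 1) end.
have X_ge0 S : 0 <= xsum x (Eset E S).
  by apply: sumr_ge0 => e; rewrite inE => /andP[/x_ge0].
have [|eps eps_gt0 eps_le] := @exists_pos_lower_bound _ _ P q.
  case=> [e /T_pos //|S /and3P[hS0 hSp ntS]]; apply: divr_gt0; last first.
    by have := X_ge0 S; lra.
  rewrite subr_gt0 lt_def pst_Eset_le // andbT; apply: contraNneq ntS => X_eq.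
  by rewrite /tight hS0 X_eq eqxx.
exists eps => //; split; [|split].
- move=> e he; rewrite /perturb mulrDl mul1r.
  have := x_ge0 e he; have : 0 <= eps * x e by rewrite mulr_ge0 ?x_ge0 // ltW.
  case: (boolP (e \in T)) => [heT|_]; last by rewrite mulr0; lra.
  by have := eps_le (inl e) heT; rewrite /= mulr1; lra.
- move=> S hS0 hSp; apply: perturb_subtour => // ntS.
  have := eps_le (inr S); rewrite /= hS0 hSp ntS => /(_ isT).
  by rewrite ler_pdivlMr //; have := X_ge0 S; lra.
- rewrite xsum_perturb x_E (setIidPr T_sub) -T_card natrD; lra.
Qed.

Lemma sum_tree_indicator (d : {set V} -> R) :
  \sum_(e in E) d e * (e \in T)%:R = \sum_(e in T) d e.
Proof.
rewrite (eq_bigr (fun e => if e \in T then d e else 0)) => [|e _]; last first.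
  by rewrite mulr_natr mulrb.
by rewrite -big_mkcondr; apply: eq_bigl => e; rewrite andb_idl // => /(subsetP T_sub).
Qed.

Lemma tree_cost_le_of_min (d : {set V} -> R) :
  (forall x', in_PST E x' -> \sum_(e in E) d e * x e <= \sum_(e in E) d e * x' e) ->
  \sum_(e in T) d e <= \sum_(e in E) d e * x e.
Proof.
move=> x_min; have [eps eps_gt0 /x_min] := perturb_pst.
have -> : \sum_(e in E) d e * perturb eps e =
    (1 + eps) * \sum_(e in E) d e * x e - eps * \sum_(e in T) d e.
  rewrite -sum_tree_indicator !mulr_sumr -sumrB.
  by apply: eq_bigr => e _; rewrite /perturb; ring.
by rewrite mulrDl mul1r => h; rewrite -(ler_pM2l eps_gt0); lra.
Qed.

End TreeInOptimalFace.

Lemma pst_card_neq0 (R : realType) (V : finType) (E : {set {set V}}) (x : {set V} -> R) :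
  in_PST E x -> #|V| != 0%N.
Proof.
move=> [x_ge0 [_ x_E]]; rewrite -lt0n -(ler1n R) -subr_ge0 -x_E.
by apply: sumr_ge0 => e /x_ge0.
Qed.

Lemma le_cy (R : realType) (V : finType) (E Sc : {set {set V}}) (c y : {set V} -> R) e :
  nonneg_on Sc y -> c e <= cy E Sc c y e.
Proof. by move=> y_ge0; rewrite lerDl sumr_ge0 // => S /andP[/y_ge0]. Qed.

Theorem lemma6 (R : realType) (V : finType) (E : {set {set V}})
  (c : {set V} -> R) (Sc : {set {set V}}) (b : {set V} -> int) (lam : R)
  (xs : {set V} -> R) (L : {set {set V}})
  (x' : {set V} -> R) (L' : {set {set V}})
  (Tf : {set V} -> {set {set V}}) (T : {set {set V}})
  (ys : {set V} -> R) :
  simple_graph E -> graph_connected E ->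
  (forall e, e \in E -> 0 <= c e) ->
  is_chain Sc ->
  1 < lam ->
  (exists x, feasible E Sc b lam x) ->
  opt_primal E Sc b lam c xs ->
  laminar_decomp E xs L ->
  rainbow_free_decomp E Sc x' L' ->
  supp E x' \subset supp E xs ->
  L \subset L' ->
  (forall S, S \in Sc -> xsum x' (dset E S) <= xsum xs (dset E S)) ->
  (forall L0, L0 \in L' ->
     Tf L0 \subset supp E x' /\ spanning_tree_contr E L' L0 (Tf L0)) ->
  T = \bigcup_(L0 in L') Tf L0 ->
  opt_dual E Sc b lam c ys ->
  \sum_(e in T) c e <= \sum_(e in E) cy E Sc c ys e * xs e /\
  \sum_(e in E) cy E Sc c ys e * xs e
    = \sum_(e in E) c e * xs e + lam * \sum_(S in Sc) (b S)%:~R * ys S.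
Proof.
move=> E_simple _ _ _ _ feas xs_opt xs_ld [x'_pst [L'_ld _]] supp_sub LL' _ Tf_spec -> ys_opt.
have [slack xs_cy_min] := complementary_slackness feas xs_opt ys_opt.
split; last by rewrite cy_sumE slack.
have [[xs_pst _] _] := xs_opt.
have Tf_tree L0 : L0 \in L' -> spanning_tree_contr E L' L0 (Tf L0) by case/Tf_spec.
have T_supp e : e \in \bigcup_(L0 in L') Tf L0 -> (e \in E) && (0 < xs e).
  case/bigcupP => L0 /Tf_spec[/subsetP Tf_supp _] /Tf_supp /(subsetP supp_sub).
  by rewrite inE.
have T_sub : \bigcup_(L0 in L') Tf L0 \subset E by apply/subsetP => e /T_supp/andP[].
have T_pos e : e \in \bigcup_(L0 in L') Tf L0 -> 0 < xs e by move/T_supp/andP=> [].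
have L'_lam := ld_laminar L'_ld; have L'_set1 := ld_set1 E_simple L'_ld.
have L'_neq0 := ld_neq0 L'_ld.
have V_neq0 := pst_card_neq0 xs_pst.
apply: le_trans (tree_cost_le_of_min xs_pst T_sub T_pos
  (card_tree E_simple xs_pst xs_ld L'_lam L'_set1 L'_neq0 Tf_tree LL' V_neq0)
  (card_Eset_tree_tight E_simple xs_pst xs_ld L'_lam L'_set1 L'_neq0 Tf_tree LL' V_neq0 T_pos)
  xs_cy_min).
by apply: ler_sum => e _; apply: le_cy; case: ys_opt.
Qed.
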